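(* Let $r,K,\mu$ satisfy Assumption 1 (in particular $\mu<1-K$). Then $$m^*\le\frac{\frac{\mu K}{r}(1-\mu)}{1-\mu-K\left(1-\frac{2\mu}{r}\right)}.$$
   Context: Assumption 1: $r\in(1,\infty)$, $\mu\in\left(0,\min\left(\frac r2,1-\frac1r,1-K,K\right)\right)$, $K\in\left(0,\min\left(1,\frac{r}{r-1}\left(1-\frac{\mu}{1-\mu}\right)\right)\right)$. $f_w(w,m):=w(1-(w+m))+\mu(m-w)$, $f_m(w,m):=rm\left(1-\frac{w+m}{K}\right)+\mu(w-m)$; $(w^*,m^* )$ is the unique solution in $(0,1)\times(0,K)$ of $f_w=f_m=0$. *)

From Stdlib Require Import Reals Lra.
Open Scope R_scope.

Definition assumption1 (r mu K : R) : Prop :=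
  1 < r /\
  0 < mu /\ mu < r / 2 /\ mu < 1 - 1 / r /\ mu < 1 - K /\ mu < K /\
  0 < K /\ K < 1 /\ K < r / (r - 1) * (1 - mu / (1 - mu)).

Definition f_w (mu w m : R) : R := w * (1 - (w + m)) + mu * (m - w).
Definition f_m (r mu K w m : R) : R := r * m * (1 - (w + m) / K) + mu * (w - m).

Definition is_equilibrium (r mu K w m : R) : Prop :=
  0 < w /\ w < 1 /\ 0 < m /\ m < K /\ f_w mu w m = 0 /\ f_m r mu K w m = 0.

(** Write [t := 1 - (w + m)] for the gap between the total population and the
    carrying capacity of [w].  At an equilibrium [0 < t < mu], and the two
    equations become [r (1 - t - K) (mu - t) = K mu t] and
    [m (2 mu - t) = (1 - t) (mu - t)].  With [D := r (1 - mu - K) + 2 K mu]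
    these give the identity [mu K (1 - mu) - m D = (mu - t) (r m - K mu)],
    so the bound [m D <= mu K (1 - mu)] reduces to [K mu <= r m].  That lower
    bound on [m] follows from [r (1 - mu) > 1] and [2 mu (1 - mu) <= 1]. *)

From Stdlib Require Import Reals Lra Psatz.
Open Scope R_scope.

Section GapCoordinates.

Variables r mu K t m : R.
Hypotheses (mu_pos : 0 < mu) (t_pos : 0 < t) (t_lt_mu : t < mu)
  (K_pos : 0 < K) (K_lt : K < 1 - t) (r_one_sub_mu_gt1 : 1 < r * (1 - mu)).
Hypotheses (gap_eq : r * (1 - t - K) * (mu - t) = K * mu * t)
  (m_gap_eq : m * (2 * mu - t) = (1 - t) * (mu - t)).

Lemma gap_product_le : (2 * mu - t) * (1 - t - K) <= (1 - t) * t.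
Proof.
  assert (Hlt : (1 - t - K) * (mu - t) < K * mu * t * (1 - mu)).
  { assert (0 < (1 - t - K) * (mu - t)) by (apply Rmult_lt_0_compat; lra).
    nra. }
  assert (Hquarter : 2 * mu * (1 - mu) <= 1) by nra.
  assert (0 <= K * t * (1 - 2 * mu * (1 - mu))) by
    (apply Rmult_le_pos; [apply Rmult_le_pos|]; lra).
  nra.
Qed.

Lemma K_mu_le_r_m : K * mu <= r * m.
Proof.
  assert (Hscaled : (1 - t - K) * (2 * mu - t) * (r * m - K * mu)
                    = K * mu * ((1 - t) * t - (2 * mu - t) * (1 - t - K))).
  { replace ((1 - t - K) * (2 * mu - t) * (r * m - K * mu))
      with ((1 - t - K) * r * (m * (2 * mu - t))
            - K * mu * (2 * mu - t) * (1 - t - K)) by ring.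
    rewrite m_gap_eq.
    replace ((1 - t - K) * r * ((1 - t) * (mu - t)))
      with ((1 - t) * (r * (1 - t - K) * (mu - t))) by ring.
    rewrite gap_eq; ring. }
  pose proof gap_product_le.
  assert (0 < (1 - t - K) * (2 * mu - t)) by (apply Rmult_lt_0_compat; lra).
  assert (0 <= K * mu) by nra.
  nra.
Qed.

Lemma bound_defect_eq :
  mu * K * (1 - mu) - m * (r * (1 - mu - K) + 2 * K * mu)
  = (mu - t) * (r * m - K * mu).
Proof.
  apply (Rmult_eq_reg_r (2 * mu - t)); [|lra].
  replace ((mu * K * (1 - mu) - m * (r * (1 - mu - K) + 2 * K * mu))
           * (2 * mu - t))
    with (mu * K * (1 - mu) * (2 * mu - t)
          - (r * (1 - mu - K) + 2 * K * mu) * (m * (2 * mu - t))) by ring.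
  replace ((mu - t) * (r * m - K * mu) * (2 * mu - t))
    with ((mu - t) * (r * (m * (2 * mu - t)) - K * mu * (2 * mu - t))) by ring.
  rewrite m_gap_eq.
  replace ((r * (1 - mu - K) + 2 * K * mu) * ((1 - t) * (mu - t)))
    with ((1 - t) * (r * (1 - t - K) * (mu - t) - r * (mu - t) * (mu - t)
                     + 2 * K * mu * (mu - t))) by ring.
  rewrite gap_eq; ring.
Qed.

Lemma m_mul_bound_denominator_le :
  m * (r * (1 - mu - K) + 2 * K * mu) <= mu * K * (1 - mu).
Proof.
  pose proof bound_defect_eq; pose proof K_mu_le_r_m.
  assert (0 <= (mu - t) * (r * m - K * mu)) by (apply Rmult_le_pos; lra).
  lra.
Qed.

End GapCoordinates.

Section Equilibrium.

Variables r mu K w m : R.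
Hypotheses (r_pos : 0 < r) (mu_pos : 0 < mu) (K_pos : 0 < K) (K_lt1 : K < 1)
  (w_pos : 0 < w) (m_pos : 0 < m).
Hypotheses (w_eq : w * (1 - (w + m)) + mu * (m - w) = 0)
  (m_eq : r * m * (K - (w + m)) + K * mu * (w - m) = 0).

Lemma equilibrium_total_lt1 : w + m < 1.
Proof.
  destruct (Rlt_or_le (w + m) 1) as [|Hge]; [assumption|exfalso].
  assert (w * (1 - (w + m)) <= 0) by nra.
  assert (w <= m) by nra.
  assert (0 < r * m) by (apply Rmult_lt_0_compat; assumption).
  assert (r * m * (K - (w + m)) < 0) by nra.
  nra.
Qed.

Lemma equilibrium_m_lt_w : m < w.
Proof.
  assert (0 < w * (1 - (w + m))).
  { pose proof equilibrium_total_lt1. apply Rmult_lt_0_compat; lra. }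
  destruct (Rlt_or_le m w); [assumption|nra].
Qed.

Lemma equilibrium_K_lt_total : K < w + m.
Proof.
  pose proof equilibrium_m_lt_w.
  assert (0 < r * m) by (apply Rmult_lt_0_compat; assumption).
  assert (0 < K * mu) by (apply Rmult_lt_0_compat; assumption).
  assert (r * m * (K - (w + m)) < 0) by nra.
  destruct (Rlt_or_le K (w + m)); [assumption|nra].
Qed.

Lemma equilibrium_total_gt : 1 - mu < w + m.
Proof.
  assert (w * (1 - (w + m) - mu) < 0).
  { replace (w * (1 - (w + m) - mu))
      with (w * (1 - (w + m)) + mu * (m - w) - mu * m) by ring.
    rewrite w_eq.
    assert (0 < mu * m) by (apply Rmult_lt_0_compat; assumption). lra. }
  destruct (Rlt_or_le (1 - mu) (w + m)); [assumption|nra].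
Qed.

Lemma equilibrium_gap_eq :
  let t := 1 - (w + m) in r * (1 - t - K) * (mu - t) = K * mu * t.
Proof.
  intro t.
  assert (Hw : w * (mu - t) = mu * m) by (unfold t; lra).
  assert (Hm : r * m * (1 - t - K) = K * w * t).
  { unfold t.
    replace (K * w * (1 - (w + m)))
      with (K * (w * (1 - (w + m)) + mu * (m - w)) + K * mu * (w - m)) by ring.
    rewrite w_eq; lra. }
  apply (Rmult_eq_reg_l m); [|lra].
  replace (m * (r * (1 - t - K) * (mu - t))) with (r * m * (1 - t - K) * (mu - t))
    by ring.
  rewrite Hm.
  replace (m * (K * mu * t)) with (K * t * (mu * m)) by ring.
  rewrite <- Hw; ring.
Qed.

Lemma equilibrium_m_gap_eq :
  let t := 1 - (w + m) in m * (2 * mu - t) = (1 - t) * (mu - t).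
Proof. intro t; unfold t; lra. Qed.

Lemma equilibrium_m_mul_bound_denominator_le :
  1 < r * (1 - mu) ->
  m * (r * (1 - mu - K) + 2 * K * mu) <= mu * K * (1 - mu).
Proof.
  intro Hr_mu.
  pose proof equilibrium_total_lt1; pose proof equilibrium_K_lt_total;
  pose proof equilibrium_total_gt.
  apply (m_mul_bound_denominator_le r mu K (1 - (w + m)));
    [lra .. | exact equilibrium_gap_eq | exact equilibrium_m_gap_eq].
Qed.

End Equilibrium.

Lemma f_m_scaled (r mu K w m : R) :
  K <> 0 -> K * f_m r mu K w m = r * m * (K - (w + m)) + K * mu * (w - m).
Proof. intro HK; unfold f_m; field; exact HK. Qed.

Theorem mainTheorem20 (r mu K wstar mstar : R) :
  assumption1 r mu K ->
  is_equilibrium r mu K wstar mstar ->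
  mstar <= (mu * K / r * (1 - mu)) / (1 - mu - K * (1 - 2 * mu / r)).
Proof.
  intros (Hr & Hmu & _ & Hmu_r & Hmu_K & _ & HK & HK1 & _)
         (Hw & _ & Hm & _ & Ew & Em).
  assert (Hr_mu : 1 < r * (1 - mu)).
  { assert (1 / r * r = 1) by (field; lra). nra. }
  assert (Em' : r * mstar * (K - (wstar + mstar)) + K * mu * (wstar - mstar) = 0).
  { rewrite <- f_m_scaled, Em by lra; ring. }
  assert (Hbound : mstar * (r * (1 - mu - K) + 2 * K * mu) <= mu * K * (1 - mu))
    by (apply (equilibrium_m_mul_bound_denominator_le r mu K wstar mstar);
        assumption || lra).
  assert (HD : 0 < r * (1 - mu - K) + 2 * K * mu) by nra.
  replace ((mu * K / r * (1 - mu)) / (1 - mu - K * (1 - 2 * mu / r)))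
    with (mu * K * (1 - mu) / (r * (1 - mu - K) + 2 * K * mu))
    by (field; lra).
  apply (Rmult_le_reg_r (r * (1 - mu - K) + 2 * K * mu)); [lra|].
  replace (mu * K * (1 - mu) / (r * (1 - mu - K) + 2 * K * mu)
           * (r * (1 - mu - K) + 2 * K * mu))
    with (mu * K * (1 - mu)) by (field; lra).
  exact Hbound.
Qed.
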